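(* Let $m\geq 2$, $n>1$ and $p\geq 1$ be integers and let $a_1,\ldots,a_m$ be positive integers with $\prod_{i=1}^m a_i\equiv 1\pmod 2$. The graph $a_1H_{n,p}\otimes a_2H_{n,p}\otimes\cdots\otimes a_mH_{n,p}$ is distance magic if and only if $n\equiv 0\pmod 2$ or $n\equiv p\equiv 1\pmod 2$.
   Context: A graph $G$ on $v$ vertices is distance magic if there is a bijection $f:V(G)\to\{1,\ldots,v\}$ and a constant $k$ such that for every vertex $x$, $\sum_{y\in N(x)}f(y)=k$, where $N(x)$ is the set of neighbours of $x$. $H_{n,p}$ denotes the complete multipartite graph with $p$ partite sets each of size $n$; $aH$ denotes the disjoint union of $a$ copies of $H$. The Kronecker (tensor) product $G\otimes H$ has vertex set $V(G)\times V(H)$, with $(g,h)\sim(g',h')$ iff $gg'\in E(G)$ and $hh'\in E(H)$. *)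

From mathcomp Require Import all_boot.
Set Implicit Arguments. Unset Strict Implicit. Unset Printing Implicit Defensive.

(* Distance magic: a bijection f : V -> {1,...,|V|} (encoded as
   V -> 'I_#|V| with label (f y).+1) and a constant k such that the sum
   of labels over the open neighbourhood of every vertex is k. *)
Definition distance_magic (V : finType) (e : rel V) : Prop :=
  exists f : V -> 'I_#|V|, bijective f /\
    exists k : nat, forall x : V, \sum_(y | e x y) (f y).+1 = k.

(* Vertex type of a H_{n,p}: (copy index, part index, position in part). *)
Definition aH_vert (a n p : nat) : finType := ('I_a * ('I_p * 'I_n))%type.

Definition aH_adj (a n p : nat) : rel (aH_vert a n p) :=
  fun u v => (u.1 == v.1) && (u.2.1 != v.2.1).

Definition kron_aH_vert (m n p : nat) (a : 'I_m -> nat) : finType :=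
  {dffun forall i : 'I_m, aH_vert (a i) n p}.

Definition kron_aH_adj (m n p : nat) (a : 'I_m -> nat) : rel (kron_aH_vert n p a) :=
  fun u v => [forall i, aH_adj (u i) (v i)].

Arguments kron_aH_vert : clear implicits.
Arguments kron_aH_adj : clear implicits.

From mathcomp Require Import all_boot zify.
Set Implicit Arguments. Unset Strict Implicit. Unset Printing Implicit Defensive.

(* Forgetting the position of a vertex inside its partite set, the product is
   the Kronecker product of the graphs a_i K_p (a_i disjoint copies of K_p),
   regular of degree (p-1)^m, with every vertex blown up into an independent
   set of t = n^m vertices.  Labelling the blow-up of a regular graph on G
   vertices amounts to filling a t x G table with 1, ..., tG so that all
   column sums agree; taking row r to be r G + (a permutation of 0..G-1), this
   is possible when t is even (alternate the identity and the reflection) and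
   when G and t are odd with t >= 3 (three rows with constant column sums,
   then alternating pairs).  Conversely, summing all neighbourhood sums of a
   distance magic graph that is regular of degree d on N vertices gives
   d N (N+1) / 2 = N k, so N is odd whenever d is; for n odd and p even the
   degree (p-1)^m n^m is odd but the order (prod a_i) p^m n^m is even. *)

Lemma distance_magic_transfer (V1 V2 : finType) (e1 : rel V1) (e2 : rel V2)
    (phi : V1 -> V2) :
  bijective phi -> (forall x y, e2 (phi x) (phi y) = e1 x y) ->
  distance_magic e1 -> distance_magic e2.
Proof.
move=> phi_bij e12 [f [f_bij [k sum_k]]].
have [psi phiK psiK] := phi_bij.
pose g y := cast_ord (bij_eq_card phi_bij) (f (psi y)).
exists g; split.
  apply: inj_card_bij; last by rewrite card_ord.
  by move=> y y' /cast_ord_inj /(bij_inj f_bij) /(can_inj psiK).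
exists k => y; rewrite -(sum_k (psi y)) (reindex phi); last exact/onW_bij.
by apply: eq_big => [x | x _]; rewrite /g ?phiK // -{1}[y]psiK e12.
Qed.

Lemma distance_magic_iso (V1 V2 : finType) (e1 : rel V1) (e2 : rel V2)
    (phi : V1 -> V2) :
  bijective phi -> (forall x y, e2 (phi x) (phi y) = e1 x y) ->
  distance_magic e1 <-> distance_magic e2.
Proof.
move=> phi_bij e12; split; first exact: distance_magic_transfer e12.
have [psi phiK psiK] := phi_bij.
apply: (distance_magic_transfer (phi := psi)); first by exists phi.
by move=> x y; rewrite -e12 !psiK.
Qed.

Lemma double_sum_succ_ord N : (\sum_(j < N) j.+1).*2 = N * N.+1.
Proof.
by elim: N => [|N IH]; rewrite ?big_ord0 // big_ord_recr doubleD IH /=; lia.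
Qed.

Lemma regular_distance_magic_odd_card (V : finType) (e : rel V) d :
  distance_magic e -> (forall y, #|[pred x | e x y]| = d) -> odd d ->
  0 < #|V| -> odd #|V|.
Proof.
move=> [f [f_bij [k sum_k]]] in_deg odd_d V_gt0.
have total : d * \sum_(j < #|V|) j.+1 = #|V| * k.
  rewrite -sum_nat_const -(eq_bigr _ (fun x _ => sum_k x)).
  rewrite (exchange_big_dep xpredT) //= big_distrr /=.
  rewrite (reindex f) /=; last exact/onW_bij.
  by apply: eq_bigr => y _; rewrite sum_nat_const in_deg.
have : #|V| * (d * #|V|.+1) = #|V| * k.*2.
  by rewrite mulnCA -double_sum_succ_ord -doubleMr total doubleMr.
move/eqP; rewrite eqn_pmul2l // => /eqP /(congr1 odd).
by rewrite oddM odd_d odd_double /=; case: odd.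
Qed.

Definition balanced_rows (G t : nat) (psi : nat -> nat -> nat) : Prop :=
  [/\ forall r g, g < G -> psi r g < G,
      forall r g g', g < G -> g' < G -> psi r g = psi r g' -> g = g' &
      exists C, forall g, g < G -> \sum_(r < t) psi r g = C].

Definition alternating_rows G r g := if odd r then G.-1 - g else g.

Lemma balanced_alternating_rows G t :
  ~~ odd t -> balanced_rows G t (alternating_rows G).
Proof.
move=> even_t; rewrite /alternating_rows; split.
- by move=> r g; case: odd => /=; lia.
- by move=> r g g'; case: odd => /=; lia.
have [s ->] : exists s, t = s.*2.
  by exists t./2; rewrite -{1}(odd_double_half t) (negbTE even_t).
exists (s * G.-1) => g g_lt.
elim: s => [|s IH]; first by rewrite big_ord0.
by rewrite doubleS !big_ord_recr /= IH odd_double /=; lia.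
Qed.

(* Rows 0, 1, 2 form a 3 x (2h+1) table whose columns all sum to 3h; the
   remaining rows come in pairs g, 2h - g. *)
Definition three_alternating_rows h r g :=
  match r with
  | 0 => g
  | 1 => if g <= h then g + h else g - h - 1
  | 2 => if g <= h then 2 * h - 2 * g else 4 * h + 1 - 2 * g
  | _ => if odd r then g else 2 * h - g
  end.

Lemma balanced_three_alternating_rows h t :
  odd t -> 2 < t -> balanced_rows h.*2.+1 t (three_alternating_rows h).
Proof.
move=> odd_t t_gt2; split.
- move=> [|[|[|r]]] g /= g_lt; [lia | | | by case: odd => /=; lia];
    by case: (leqP g h); lia.
- move=> [|[|[|r]]] g g' /= g_lt g'_lt; [lia | | | by case: odd => /=; lia];
    by case: (leqP g h); case: (leqP g' h); lia.
have [s ->] : exists s, t = (s.*2).+3.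
  exists (t./2).-1; move: (odd_double_half t).
  by rewrite odd_t add1n -mul2n; lia.
exists (3 * h + s * h.*2) => g g_lt.
elim: s => [|s IH].
  by rewrite !big_ord_recr big_ord0 /=; case: (leqP g h); lia.
rewrite doubleS 2!big_ord_recr /= IH odd_double /=; lia.
Qed.

Lemma balanced_rows_exist G t :
  ~~ odd t \/ [/\ odd G, odd t & 2 < t] -> exists psi, balanced_rows G t psi.
Proof.
case=> [even_t | [odd_G odd_t t_gt2]].
  by exists (alternating_rows G); apply: balanced_alternating_rows.
exists (three_alternating_rows G./2).
rewrite -{1}[G]odd_double_half odd_G add1n.
exact: balanced_three_alternating_rows.
Qed.

Definition blowup (K R : finType) (eK : rel K) : rel (K * R) :=
  fun x y => eK x.1 y.1.
Arguments blowup {K} R eK.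

Lemma blowup_in_degree (K R : finType) (eK : rel K) (y : K * R) :
  #|[pred x | blowup R eK x y]| = #|[pred k | eK k y.1]| * #|R|.
Proof. by rewrite -cardX; apply: eq_card => -[k r]; rewrite !inE andbT. Qed.

Lemma blowup_distance_magic (K R : finType) (eK : rel K) d psi :
  (forall k, #|[pred k' | eK k k']| = d) -> balanced_rows #|K| #|R| psi ->
  distance_magic (blowup R eK).
Proof.
move=> out_deg [psi_lt psi_inj [C col_sum]].
pose label (x : K * R) :=
  enum_rank x.2 * #|K| + psi (enum_rank x.2) (enum_rank x.1).
have label_lt x : label x < #|{: K * R}|.
  have r_lt : enum_rank x.2 < #|R| := ltn_ord _.
  have := psi_lt (enum_rank x.2) _ (ltn_ord (enum_rank x.1)).
  by rewrite card_prod /label; nia.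
pose f x := Ordinal (label_lt x).
have f_inj : injective f.
  move=> [k r] [k' r'] /(congr1 val); rewrite /= /label /= => E.
  have K_gt0 : 0 < #|K| by apply: leq_ltn_trans (ltn_ord (enum_rank k)).
  have Er : enum_rank r = enum_rank r'.
    apply: ord_inj; have := congr1 (divn^~ #|K|) E.
    by rewrite /= !divnMDl // !divn_small ?addn0 ?psi_lt.
  rewrite Er in E; move/addnI: E => /psi_inj Ek.
  by rewrite (enum_rank_inj Er) (enum_rank_inj (ord_inj (Ek _ _))).
exists f; split; first by apply: inj_card_bij f_inj _; rewrite card_ord.
exists (d * (C + \sum_(j < #|R|) (j * #|K|).+1)) => -[k r].
rewrite -(out_deg k) -sum_nat_const.
transitivity (\sum_(k' | eK k k') \sum_(r' : R) (label (k', r')).+1).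
  by rewrite pair_big_dep; apply: eq_bigl => -[k' r']; rewrite andbT.
apply: eq_bigr => k' _.
transitivity (\sum_(j < #|R|) ((j * #|K|).+1 + psi j (enum_rank k'))).
  rewrite [RHS](reindex enum_rank) /=; last first.
    by apply/onW_bij; exists enum_val; [exact: enum_rankK | exact: enum_valK].
  by apply: eq_bigr => r' _; rewrite addSn.
by rewrite big_split /= col_sum // addnC.
Qed.

Section KroneckerProduct.
Variables (m n p : nat) (a : 'I_m -> nat).

Definition kron_aK_vert : finType := {dffun forall i : 'I_m, 'I_(a i) * 'I_p}.

Definition kron_aK_adj : rel kron_aK_vert :=
  fun k k' => [forall i, ((k i).1 == (k' i).1) && ((k i).2 != (k' i).2)].

Definition kron_aH_of (x : kron_aK_vert * {ffun 'I_m -> 'I_n}) :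
    kron_aH_vert m n p a :=
  [ffun i => ((x.1 i).1, ((x.1 i).2, x.2 i))].

Lemma kron_aH_of_bij : bijective kron_aH_of.
Proof.
pose split_vert (y : kron_aH_vert m n p a) :=
  ([ffun i => ((y i).1, (y i).2.1)] : kron_aK_vert,
   [ffun i => (y i).2.2] : {ffun 'I_m -> 'I_n}).
exists split_vert => [[k r] | y].
  by congr pair; apply/ffunP => i; rewrite !ffunE //; case: (k i).
by apply/ffunP => i; rewrite !ffunE; case: (y i) => ? [].
Qed.

Lemma kron_aH_adj_of x y :
  kron_aH_adj m n p a (kron_aH_of x) (kron_aH_of y) =
  blowup {ffun 'I_m -> 'I_n} kron_aK_adj x y.
Proof. by apply: eq_forallb => i; rewrite /aH_adj !ffunE. Qed.

Lemma kron_aK_adjC : symmetric kron_aK_adj.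
Proof.
by move=> k k'; apply: eq_forallb => i; rewrite eq_sym [_.2 == _]eq_sym.
Qed.

Lemma card_kron_aK_vert : #|kron_aK_vert| = \prod_(i < m) (a i * p).
Proof.
rewrite card_dep_ffun foldrE big_map big_enum /=.
by apply: eq_bigr => i _; rewrite card_prod !card_ord.
Qed.

Lemma card_kron_aK_nbrs k : #|[pred k' | kron_aK_adj k k']| = p.-1 ^ m.
Proof.
pose nbrs i := setX [set (k i).1] [set~ (k i).2].
have -> : #|[pred k' | kron_aK_adj k k']| = #|setXn nbrs|.
  apply: eq_card => k'; rewrite inE in_setXn; apply: eq_forallb => i.
  by rewrite !inE eq_sym [_.2 == _]eq_sym.
rewrite cardsXn -[m in RHS]card_ord -prod_nat_const; apply: eq_bigr => i _.
by rewrite cardsX cards1 cardsC1 card_ord mul1n.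
Qed.

Lemma card_kron_aK_in_nbrs k : #|[pred k' | kron_aK_adj k' k]| = p.-1 ^ m.
Proof.
rewrite -(card_kron_aK_nbrs k).
by apply: eq_card => k'; rewrite !inE kron_aK_adjC.
Qed.

Lemma kron_aH_distance_magicE :
  distance_magic (kron_aH_adj m n p a) <->
  distance_magic (blowup {ffun 'I_m -> 'I_n} kron_aK_adj).
Proof.
by symmetry; exact: distance_magic_iso kron_aH_of_bij kron_aH_adj_of.
Qed.

End KroneckerProduct.

Theorem theorem17 (m n p : nat) (a : 'I_m -> nat) :
  2 <= m -> 1 < n -> 1 <= p ->
  (forall i, 0 < a i) ->
  odd (\prod_(i < m) a i) ->
  distance_magic (kron_aH_adj m n p a) <->
  (~~ odd n \/ (odd n /\ odd p)).
Proof.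
move=> m_ge2 n_gt1 p_ge1 a_gt0 odd_prod.
have card_K : #|kron_aK_vert p a| = (\prod_(i < m) a i) * p ^ m.
  by rewrite card_kron_aK_vert big_split /= prod_nat_const card_ord.
have card_R : #|{ffun 'I_m -> 'I_n}| = n ^ m by rewrite card_ffun !card_ord.
rewrite kron_aH_distance_magicE; split => [dm | cond].
  case: (boolP (odd n)) => [odd_n | ]; [right; split => // | by left].
  apply: contraT => even_p.
  have odd_p1 : odd p.-1 by move: even_p; rewrite -(prednK p_ge1) /= negbK.
  have := regular_distance_magic_odd_card dm (d := p.-1 ^ m * n ^ m).
  rewrite card_prod card_K card_R !oddM !oddX odd_n odd_p1 (negbTE even_p).
  rewrite !orbT orbF eqn0Ngt (ltnW m_ge2) andbF; apply=> //.
  - by move=> y; rewrite blowup_in_degree card_kron_aK_in_nbrs card_R.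
  - by rewrite !muln_gt0 prodn_gt0 // !expn_gt0 p_ge1; lia.
have [psi balanced] :
    exists psi, balanced_rows #|kron_aK_vert p a| #|{ffun 'I_m -> 'I_n}| psi.
  apply: balanced_rows_exist; rewrite card_K card_R oddM odd_prod !oddX.
  case: cond => [even_n | [odd_n odd_p]]; [left | right; split].
  - by rewrite (negbTE even_n) orbF eqn0Ngt (ltnW m_ge2).
  - by rewrite odd_p orbT.
  - by rewrite odd_n orbT.
  - have n_neq2 : n != 2 by apply: contraTneq odd_n => ->.
    have n_gt2 : 2 < n by lia.
    by rewrite (leq_trans n_gt2) // -{1}[n]expn1 leq_pexp2l // ltnW.
exact: blowup_distance_magic (@card_kron_aK_nbrs m p a) balanced.
Qed.
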